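(* In the fixed-order setting, for any instance of CAP with $n$ agents and $m$ items, one can decide in $O(nm^3)$ time whether there exists an order-consistent contiguous allocation $\mathbf A$ that is equitable, i.e. $v_i(A_i)=v_j(A_j)$ for all $i,j\in N$, and construct one if it exists.
   Context: An instance of CAP consists of agents $N=[n]$ and indivisible items $M=\{g_1,\dots,g_m\}$ arranged on a path in index order; each agent $i$ has an additive valuation $v_i:2^M\to\mathbb{Z}_{\ge0}$, and every item is valued positively by some agent. An allocation $(A_1,\dots,A_n)$ is a partition of $M$ into possibly empty bundles. It is order-consistent contiguous if there are indices $1=k_1\le k_2\le\dots\le k_{n+1}=m+1$ with $A_i=\{g_{k_i},\dots,g_{k_{i+1}-1}\}$ for all $i$; the fixed-order setting allows only such allocations. *)

From Stdlib Require Import ZArith.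
From mathcomp Require Import all_boot.
Set Implicit Arguments.
Unset Strict Implicit.
Unset Printing Implicit Defensive.

(* CAP instances: n agents, m items g_0, ..., g_{m-1} on a path        *)
(* (0-indexed).  An additive valuation is given by the item values     *)
(* v i j = v_i({g_j}) in Z_{>=0}.                                      *)

Definition valuation (n m : nat) (v : 'I_n -> 'I_m -> nat) (i : 'I_n)
    (S : {set 'I_m}) : nat :=
  \sum_(j in S) v i j.

Definition items_positively_valued (n m : nat) (v : 'I_n -> 'I_m -> nat) : Prop :=
  forall j : 'I_m, exists i : 'I_n, 0 < v i j.

Definition is_allocation (n m : nat) (A : 'I_n -> {set 'I_m}) : Prop :=
  (forall j : 'I_m, exists i : 'I_n, j \in A i) /\
  (forall (i i' : 'I_n) (j : 'I_m), j \in A i -> j \in A i' -> i = i').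

(* cut indices 0 = k_0 <= k_1 <= ... <= k_n = m (0-indexed version of
   1 = k_1 <= ... <= k_{n+1} = m+1) *)
Definition cut_indices (n m : nat) (k : nat -> nat) : Prop :=
  k 0 = 0 /\ k n = m /\ (forall i, i < n -> k i <= k i.+1).

Definition alloc_of_cuts (n m : nat) (k : nat -> nat) : 'I_n -> {set 'I_m} :=
  fun i => [set j : 'I_m | (k i <= j) && (j < k i.+1)].

Definition order_consistent_contiguous (n m : nat) (A : 'I_n -> {set 'I_m}) : Prop :=
  exists k : nat -> nat, cut_indices n m k /\
    forall i : 'I_n, A i = [set j : 'I_m | (k i <= j) && (j < k i.+1)].

Definition equitable (n m : nat) (v : 'I_n -> 'I_m -> nat)
    (A : 'I_n -> {set 'I_m}) : Prop :=
  forall i j : 'I_n, valuation v i (A i) = valuation v j (A j).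

(* Machine model: a unit-cost RAM given as a while-language over an    *)
(* integer memory Z -> Z (indirect addressing via Deref), with           *)
(* addition, subtraction and comparisons as unit-cost operations.      *)
(* Each executed statement (Skip, Store, each If test, each While       *)
(* test) costs one step; expressions are part of the fixed program,    *)
(* hence of constant size.                                             *)

Inductive aexp : Type :=
| Const : Z -> aexp
| Deref : aexp -> aexp
| Add : aexp -> aexp -> aexp
| Sub : aexp -> aexp -> aexp.

Inductive bexp : Type :=
| BLt : aexp -> aexp -> bexp
| BEq : aexp -> aexp -> bexp
| BNot : bexp -> bexp
| BAnd : bexp -> bexp -> bexp.

Inductive stmt : Type :=
| Skip : stmt
| Store : aexp -> aexp -> stmt
| Seq : stmt -> stmt -> stmt
| If : bexp -> stmt -> stmt -> stmt
| While : bexp -> stmt -> stmt.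

Definition memory := Z -> Z.

Fixpoint aeval (mem : memory) (e : aexp) : Z :=
  match e with
  | Const z => z
  | Deref a => mem (aeval mem a)
  | Add a b => (aeval mem a + aeval mem b)%Z
  | Sub a b => (aeval mem a - aeval mem b)%Z
  end.

Fixpoint beval (mem : memory) (b : bexp) : bool :=
  match b with
  | BLt a c => Z.ltb (aeval mem a) (aeval mem c)
  | BEq a c => Z.eqb (aeval mem a) (aeval mem c)
  | BNot b => negb (beval mem b)
  | BAnd b c => beval mem b && beval mem c
  end.

Definition update (mem : memory) (a v : Z) : memory :=
  fun x => if Z.eqb x a then v else mem x.

Inductive exec : stmt -> memory -> nat -> memory -> Prop :=
| ExSkip mem : exec Skip mem 1 mem
| ExStore mem a e :
    exec (Store a e) mem 1 (update mem (aeval mem a) (aeval mem e))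
| ExSeq s1 s2 mem1 mem2 mem3 t1 t2 :
    exec s1 mem1 t1 mem2 -> exec s2 mem2 t2 mem3 ->
    exec (Seq s1 s2) mem1 (t1 + t2) mem3
| ExIfT b s1 s2 mem mem' t :
    beval mem b = true -> exec s1 mem t mem' ->
    exec (If b s1 s2) mem t.+1 mem'
| ExIfF b s1 s2 mem mem' t :
    beval mem b = false -> exec s2 mem t mem' ->
    exec (If b s1 s2) mem t.+1 mem'
| ExWhileF b s mem :
    beval mem b = false -> exec (While b s) mem 1 mem
| ExWhileT b s mem1 mem2 mem3 t1 t2 :
    beval mem1 b = true -> exec s mem1 t1 mem2 ->
    exec (While b s) mem2 t2 mem3 ->
    exec (While b s) mem1 (t1 + t2).+1 mem3.

(* Input encoding: mem[0] = n, mem[1] = m,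
   mem[2 + i*m + j] = v_i(g_j), every other cell is 0. *)
Definition input_memory (n m : nat) (v : 'I_n -> 'I_m -> nat) : memory :=
  fun x =>
    if Z.eqb x 0 then Z.of_nat n
    else if Z.eqb x 1 then Z.of_nat m
    else if (2 <=? x)%Z then
      let a := (Z.to_nat x - 2)%nat in
      match insub (a %/ m) with
      | Some i =>
          match insub (a %% m) with
          | Some j => Z.of_nat (v i j)
          | None => 0%Z
          end
      | None => 0%Z
      end
    else 0%Z.

(* In an equitable order-consistent allocation every agent gets the value that
   agent 0 gets from its bundle [0, k1), so the common value is one of the
   m + 1 prefix values T = v_0([0, k1)).  For fixed T, cut b is reachable by
   the first i + 1 agents iff some cut a <= b is reachable by the first i
   agents and v_i([a, b)) = T; with prefix sums each test is O(1), so the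
   n x (m + 1) reachability table costs O(n m^2), and all candidates O(n m^3).
   Storing a predecessor a + 1 in each reachable entry lets the cuts be read
   back in O(n) once cut m is reachable by all n agents. *)

From Pilot Require Import Defs.
From Stdlib Require Import ZArith Lia.
From mathcomp Require Import all_boot zify.
Set Implicit Arguments.
Unset Strict Implicit.
Unset Printing Implicit Defensive.

(** * Reachable cut positions *)

Section Reachability.
Variables (n m : nat) (v : 'I_n -> 'I_m -> nat).

(* [v] extended by 0 to all natural indices, as the program sees it. *)
Definition item_value (i j : nat) : nat :=
  match @insub _ (fun x => x < n) _ i, @insub _ (fun x => x < m) _ j with
  | Some i', Some j' => v i' j'
  | _, _ => 0
  end.

Definition prefix_value (i b : nat) : nat := \sum_(0 <= j < b) item_value i j.

(* [reachable T i b]: agents [0, i) can receive consecutive bundles covering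
   the items [0, b), each agent valuing its own bundle at exactly [T]. *)
Fixpoint reachable (T i b : nat) : bool :=
  if i is i'.+1 then
    [exists a : 'I_b.+1, reachable T i' a && (prefix_value i' b == prefix_value i' a + T)]
  else b == 0.

Lemma item_value_ord (i : 'I_n) (j : 'I_m) : item_value i j = v i j.
Proof.
rewrite /item_value (insubT (fun x => x < n) (ltn_ord i)).
rewrite (insubT (fun x => x < m) (ltn_ord j)).
by congr v; apply: val_inj.
Qed.

Lemma prefix_value0 i : prefix_value i 0 = 0.
Proof. by rewrite /prefix_value big_geq. Qed.

Lemma prefix_valueS i b : prefix_value i b.+1 = prefix_value i b + item_value i b.
Proof. by rewrite /prefix_value big_nat_recr. Qed.

Lemma leq_prefix_value i a b : a <= b -> prefix_value i a <= prefix_value i b.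
Proof.
by move=> le_ab; rewrite /prefix_value (@big_cat_nat _ _ _ a 0 b) //=; apply: leq_addr.
Qed.

Lemma prefix_value_ord (i : 'I_n) b : b <= m ->
  prefix_value i b = \sum_(j < m | j < b) v i j.
Proof.
move=> le_bm; rewrite /prefix_value (big_nat_widen 0 b m) // big_mkord.
by apply: eq_bigr => j _; rewrite item_value_ord.
Qed.

Lemma valuation_interval (i : 'I_n) a b : a <= b -> b <= m ->
  valuation v i [set j : 'I_m | (a <= j) && (j < b)] = prefix_value i b - prefix_value i a.
Proof.
move=> le_ab le_bm; rewrite /valuation (prefix_value_ord i le_bm).
rewrite (prefix_value_ord i (leq_trans le_ab le_bm)).
rewrite (bigID (fun j : 'I_m => j < a) (fun j : 'I_m => j < b)) /=.
have -> : \sum_(j < m | (j < b) && (j < a)) v i j = \sum_(j < m | j < a) v i j.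
  apply: eq_bigl => j; case: (ltnP j a) => lt_ja; rewrite ?andbF ?andbT //.
  exact: leq_trans lt_ja le_ab.
rewrite addKn big_mkcond [RHS]big_mkcond /=; apply: eq_bigr => j _.
by rewrite in_set -leqNgt andbC.
Qed.

Section Cuts.
Variable k : nat -> nat.
Hypothesis cuts_k : cut_indices n m k.

Lemma cut_indices_mono a b : a <= b -> b <= n -> k a <= k b.
Proof.
case: cuts_k => _ [_ le_kS] le_ab; elim: b le_ab => [|b IHb].
  by rewrite leqn0 => /eqP ->.
rewrite leq_eqVlt => /orP [/eqP -> //| lt_ab] lt_bn.
exact: leq_trans (IHb lt_ab (ltnW lt_bn)) (le_kS b lt_bn).
Qed.

Lemma cut_indices_le a : a <= n -> k a <= m.
Proof. by case: (cuts_k) => _ [kn _] /cut_indices_mono /(_ (leqnn n)); rewrite kn. Qed.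

Lemma cut_indices_cover (j : 'I_m) :
  exists i : 'I_n, (k i <= j) && (j < k i.+1).
Proof.
have [k0 [kn _]] := cuts_k.
suff cover : forall d i, n - i = d -> i <= n -> k i <= j ->
    exists i' : 'I_n, (k i' <= j) && (j < k i'.+1).
  by apply: (cover (n - 0) 0) => //; rewrite k0.
elim=> [|d IHd] i ni le_in le_kj.
  have ein : i = n by lia.
  by have := ltn_ord j; rewrite ein in le_kj; lia.
have lt_in : i < n by lia.
case: (ltnP j (k i.+1)) => lt_jk; first by exists (Ordinal lt_in); rewrite /= le_kj.
by apply: (IHd i.+1) => //; lia.
Qed.

Lemma alloc_of_cuts_is_allocation : is_allocation (@alloc_of_cuts n m k).
Proof.
split=> [j | i i' j].
  by have [i hi] := cut_indices_cover j; exists i; rewrite inE.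
rewrite !inE => /andP [le_ij lt_ji] /andP [le_i'j lt_ji'].
apply: val_inj; apply/eqP; rewrite eqn_leq; apply/andP; split; rewrite leqNgt.
  by apply/negP => /= lt_i'i; have := cut_indices_mono lt_i'i (ltnW (ltn_ord i)); lia.
by apply/negP => /= lt_ii'; have := cut_indices_mono lt_ii' (ltnW (ltn_ord i')); lia.
Qed.

Lemma valuation_alloc_of_cuts (i : 'I_n) :
  valuation v i (@alloc_of_cuts n m k i) = prefix_value i (k i.+1) - prefix_value i (k i).
Proof.
apply: valuation_interval; first by case: cuts_k => _ [_]; apply.
exact: cut_indices_le (ltn_ord i).
Qed.

End Cuts.

Lemma reachable_of_equitable A : 0 < n ->
  order_consistent_contiguous A -> equitable v A ->
  exists2 t, t <= m & reachable (prefix_value 0 t) n m.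
Proof.
move=> n_gt0 [k [cuts_k defA]] eqA; pose i0 : 'I_n := Ordinal n_gt0.
have [k0 [kn le_kS]] := cuts_k.
exists (k 1); first exact: (cut_indices_le cuts_k n_gt0).
have step (i : 'I_n) : prefix_value i (k i.+1) = prefix_value i (k i) + prefix_value 0 (k 1).
  move: (eqA i i0); rewrite !defA (valuation_alloc_of_cuts cuts_k i).
  rewrite (valuation_alloc_of_cuts cuts_k i0) /=.
  rewrite k0 prefix_value0 subn0.
  have := leq_prefix_value i (le_kS i (ltn_ord i)); lia.
suff reach_k i : i <= n -> reachable (prefix_value 0 (k 1)) i (k i) by rewrite -kn reach_k.
elim: i => [|i IHi] le_in; first by rewrite /= k0.
apply/existsP; have le_k : k i < (k i.+1).+1 by rewrite ltnS le_kS.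
exists (Ordinal le_k); apply/andP; split; first exact: IHi (ltnW le_in).
by rewrite /= (step (Ordinal le_in)).
Qed.

Lemma equitable_of_chain T k : k 0 = 0 -> k n = m ->
  (forall i, i < n -> k i <= k i.+1 /\ prefix_value i (k i.+1) = prefix_value i (k i) + T) ->
  cut_indices n m k /\ equitable v (@alloc_of_cuts n m k).
Proof.
move=> k0 kn chain.
have cuts_k : cut_indices n m k by split=> //; split=> // i /chain [].
split=> // i j; rewrite !valuation_alloc_of_cuts //.
by rewrite (proj2 (chain i (ltn_ord i))) (proj2 (chain j (ltn_ord j))) !addKn.
Qed.

End Reachability.

(** * Total correctness with step bounds *)

Definition terminates (s : stmt) (mem : memory) (Q : memory -> nat -> Prop) : Prop :=
  exists mem' t, exec s mem t mem' /\ Q mem' t.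

Lemma terminates_exec s mem t mem' (Q : memory -> nat -> Prop) :
  exec s mem t mem' -> Q mem' t -> terminates s mem Q.
Proof. by move=> ex_s HQ; exists mem', t. Qed.

Lemma terminates_weaken s mem (P Q : memory -> nat -> Prop) :
  terminates s mem P -> (forall mem' t, P mem' t -> Q mem' t) -> terminates s mem Q.
Proof. by move=> [mem' [t [ex HP]]] PQ; apply: (terminates_exec ex); apply: PQ. Qed.

Lemma terminates_store a e mem (Q : memory -> nat -> Prop) :
  Q (update mem (aeval mem a) (aeval mem e)) 1 -> terminates (Store a e) mem Q.
Proof. exact/terminates_exec/ExStore. Qed.

Lemma terminates_seq s1 s2 mem P (Q : memory -> nat -> Prop) :
  terminates s1 mem P ->
  (forall mem1 t1, P mem1 t1 -> terminates s2 mem1 (fun mem' t2 => Q mem' (t1 + t2))) ->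
  terminates (Seq s1 s2) mem Q.
Proof.
move=> [mem1 [t1 [ex1 /[swap] /[apply] -[mem' [t2 [ex2 HQ]]]]]].
exact: terminates_exec (ExSeq ex1 ex2) HQ.
Qed.

Lemma terminates_store_seq a e s mem (Q : memory -> nat -> Prop) :
  terminates s (update mem (aeval mem a) (aeval mem e)) (fun mem' t => Q mem' t.+1) ->
  terminates (Seq (Store a e) s) mem Q.
Proof. by move=> [mem' [t [ex HQ]]]; apply: terminates_exec (ExSeq (ExStore _ _ _) ex) HQ. Qed.

Lemma terminates_if b s1 s2 mem (Q : memory -> nat -> Prop) :
  terminates (if beval mem b then s1 else s2) mem (fun mem' t => Q mem' t.+1) ->
  terminates (If b s1 s2) mem Q.
Proof.
case Eb: (beval mem b) => -[mem' [t [ex HQ]]]; apply: (terminates_exec _ HQ).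
  exact: ExIfT.
exact: ExIfF.
Qed.

Lemma terminates_while_measure b s (Inv : nat -> memory -> Prop) c :
  (forall k mem, Inv k mem -> beval mem b ->
     terminates s mem (fun mem' t => exists2 k', k' < k & Inv k' mem' /\ t <= c)) ->
  forall k mem, Inv k mem ->
  terminates (While b s) mem
    (fun mem' t => (exists k', Inv k' mem') /\ beval mem' b = false /\ t <= k * c.+1 + 1).
Proof.
move=> step k; elim/ltn_ind: k => k IHk mem Hk.
case Eb: (beval mem b); last first.
  apply: (terminates_exec (ExWhileF s Eb)); split; first by exists k.
  by split=> //; rewrite leq_addl.
have [mem1 [t1 [ex1 [k' lt_k'k [Hk' le_t1c]]]]] := step _ _ Hk Eb.
have [mem' [t2 [ex2 [Hinv [Eb' le_t2]]]]] := IHk _ lt_k'k _ Hk'.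
apply: (terminates_exec (ExWhileT Eb ex1 ex2)); split=> //; split=> //.
have : k' * c.+1 <= k.-1 * c.+1 by rewrite leq_mul2r; lia.
by case: k lt_k'k {IHk Hk} => // k _; rewrite mulSn /=; lia.
Qed.

Lemma terminates_while_count b s (Inv : nat -> memory -> Prop) K c :
  (forall i mem, Inv i mem -> beval mem b = (i < K)) ->
  (forall i mem, i < K -> Inv i mem -> terminates s mem (fun mem' t => Inv i.+1 mem' /\ t <= c)) ->
  forall mem, Inv 0 mem ->
  terminates (While b s) mem (fun mem' t => Inv K mem' /\ t <= K * c.+1 + 1).
Proof.
move=> test step mem Inv0.
pose Rem d mem := d <= K /\ Inv (K - d) mem.
have step_rem d mem1 : Rem d mem1 -> beval mem1 b ->
    terminates s mem1 (fun mem' t => exists2 d', d' < d & Rem d' mem' /\ t <= c).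
  move=> [le_dK Hd]; rewrite (test _ _ Hd) => lt_dK.
  have [mem2 [t [ex [Hd' le_tc]]]] := step _ _ lt_dK Hd.
  apply: (terminates_exec ex); exists d.-1; first lia.
  rewrite /Rem; have -> : K - d.-1 = (K - d).+1 by lia.
  by split=> //; split=> //; lia.
have RemK : Rem K mem by rewrite /Rem subnn.
have [mem' [t [ex [[d [le_dK Hd]] [Eb le_t]]]]] :=
  terminates_while_measure step_rem RemK.
move: Eb; rewrite (test _ _ Hd) => /negbT; rewrite -leqNgt => le_Kd.
have eKd : K - d = K by lia.
by rewrite eKd in Hd; apply: (terminates_exec ex).
Qed.

Lemma Z_of_nat_add1 a : (Z.of_nat a + 1)%Z = Z.of_nat a.+1.
Proof. lia. Qed.

Lemma Z_ltb_of_nat a b : (Z.of_nat a <? Z.of_nat b)%Z = (a < b).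
Proof. by case: Z.ltb_spec => lt_ab; apply/esym/idP; [|apply/negP]; lia. Qed.

Lemma Z_nltb_of_nat a b : ~~ (Z.of_nat b <? Z.of_nat a)%Z = (a < b.+1).
Proof. by rewrite Z_ltb_of_nat ltnNge negbK ltnS. Qed.

Lemma Z_eqb_sub_of_nat x y T : (Z.of_nat x - Z.of_nat y =? Z.of_nat T)%Z = (x == y + T).
Proof. by case: Z.eqb_spec => E; apply/esym; [apply/eqP | apply/negbTE/eqP]; lia. Qed.

Ltac is_Z_literal x := match x with Zneg _ => idtac | Zpos _ => idtac | Z0 => idtac end.

(* Unfolds every [update] in the goal into case distinctions on addresses,
   deciding those between literals and discarding the arithmetically
   impossible ones. *)
Ltac mem_cases :=
  rewrite /update; cbv beta;
  repeat match goal with |- context [Z.eqb ?x ?y] =>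
    is_Z_literal x; is_Z_literal y;
    let b := eval compute in (Z.eqb x y) in change (Z.eqb x y) with b end;
  cbv iota;
  repeat (case: Z.eqb_spec => ?;
    [first [exfalso; lia | exfalso; nia | idtac] | first [exfalso; lia | idtac]]).

Ltac mem_frame H := move=> *; mem_cases; apply: H.

Ltac rewrite_cells mem :=
  repeat match goal with H : mem ?x = _ |- context [mem ?x] => rewrite H end.

(** * Memory layout and prefix sums *)

(* The input occupies addresses [0, 2 + n m).  The registers live at
   [-11, -1]; the prefix table [P] and the reachability table [Q] interleave
   below [-20], entry (i, b) at offset [i (m + 1) + b].  So nothing the
   program writes before its output overlaps the input. *)
Notation rN := (-1)%Z.
Notation rM := (-2)%Z.
Notation rAgent := (-3)%Z.
Notation rEnd := (-4)%Z.
Notation rPred := (-5)%Z.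
Notation rTarget := (-6)%Z.
Notation rFound := (-7)%Z.
Notation rCand := (-8)%Z.
Notation rRow := (-9)%Z.
Notation rInput := (-10)%Z.
Notation rCut := (-11)%Z.
Notation P_cell k := (-20 - (k + k))%Z.
Notation Q_cell k := (-21 - (k + k))%Z.

Notation Reg x := (Deref (Const x)).
Notation "a +' b" := (Add a b) (at level 50, left associativity).
Notation P_at e := (Defs.Sub (Const (-20)) (Add e e)).
Notation Q_at e := (Defs.Sub (Const (-21)) (Add e e)).

Lemma input_memory_cell n m (v : 'I_n -> 'I_m -> nat) i j : j < m ->
  input_memory v (Z.of_nat (2 + i * m + j)) = Z.of_nat (item_value v i j).
Proof.
move=> lt_jm; rewrite /input_memory.
have -> : Z.eqb (Z.of_nat (2 + i * m + j)) 0 = false by apply/Z.eqb_neq; lia.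
have -> : Z.eqb (Z.of_nat (2 + i * m + j)) 1 = false by apply/Z.eqb_neq; lia.
have -> : (2 <=? Z.of_nat (2 + i * m + j))%Z = true by apply/Z.leb_le; lia.
have -> : (Z.to_nat (Z.of_nat (2 + i * m + j)) - 2)%nat = i * m + j by lia.
rewrite divnMDl ?(leq_ltn_trans _ lt_jm) // divn_small // addn0 modnMDl modn_small //.
by rewrite /item_value; case: insub => // i'; case: insub.
Qed.

Definition prog_prefix_row : stmt :=
  While (BLt (Reg rEnd) (Reg rM))
    (Seq (Store (P_at (Reg rRow +' Reg rEnd +' Const 1))
                (Deref (P_at (Reg rRow +' Reg rEnd)) +' Deref (Reg rInput +' Reg rEnd)))
         (Store (Const rEnd) (Reg rEnd +' Const 1))).

Definition prog_prefix_loop : stmt :=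
  While (BLt (Reg rAgent) (Reg rN))
    (Seq (Store (P_at (Reg rRow)) (Const 0))
    (Seq (Store (Const rEnd) (Const 0))
    (Seq prog_prefix_row
    (Seq (Store (Const rRow) (Reg rRow +' Reg rM +' Const 1))
    (Seq (Store (Const rInput) (Reg rInput +' Reg rM))
         (Store (Const rAgent) (Reg rAgent +' Const 1))))))).

Definition prog_prefix : stmt :=
  Seq (Store (Const rAgent) (Const 0)) (Seq (Store (Const rRow) (Const 0))
  (Seq (Store (Const rInput) (Const 2)) prog_prefix_loop)).

Section PrefixTable.
Variables (n m : nat) (v : 'I_n -> 'I_m -> nat).

Definition sizes_loaded mem := mem rN = Z.of_nat n /\ mem rM = Z.of_nat m.

Definition input_loaded mem := forall i j, j < m ->
  mem (Z.of_nat (2 + i * m + j)) = Z.of_nat (item_value v i j).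

Definition prefix_table r mem := forall i b, i < r -> b <= m ->
  mem (P_cell (Z.of_nat (i * m.+1 + b))) = Z.of_nat (prefix_value v i b).

Definition prefix_regs i mem := [/\ mem rAgent = Z.of_nat i,
  mem rRow = Z.of_nat (i * m.+1) & mem rInput = Z.of_nat (2 + i * m)].

Definition prefix_inv i mem :=
  [/\ sizes_loaded mem, input_loaded mem, prefix_table i mem & prefix_regs i mem].

Definition prefix_row_inv i b mem := prefix_inv i mem /\
  [/\ mem rEnd = Z.of_nat b, b <= m &
      forall b', b' <= b ->
        mem (P_cell (Z.of_nat (i * m.+1 + b'))) = Z.of_nat (prefix_value v i b')].

Lemma prefix_row_correct i mem : prefix_row_inv i 0 mem ->
  terminates prog_prefix_row mem (fun mem' t => prefix_row_inv i m mem' /\ t <= m * 3 + 1).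
Proof.
apply: (terminates_while_count (Inv := prefix_row_inv i)).
  by move=> b mem1 [[[_ hM] _ _ _] [hB _ _]]; rewrite /= hM hB Z_ltb_of_nat.
move=> b mem1 lt_bm [[[hN hM] hinp hP [hI hW hX]] [hB _ hrow]].
apply: terminates_store_seq; apply: terminates_store; cbn [aeval].
rewrite hW hB hX -(Nat2Z.inj_add (i * m.+1)) -(Nat2Z.inj_add (2 + i * m)) Z_of_nat_add1.
split=> //; split; split.
- by split; mem_cases.
- by mem_frame hinp.
- by mem_frame hP.
- by split; mem_cases.
- by mem_cases; rewrite_cells mem1; lia.
- done.
- move=> b' le_b'b; mem_cases; last by apply: hrow; lia.
  by rewrite hrow // hinp // (_ : b' = b.+1) ?prefix_valueS; lia.
Qed.

Lemma prefix_loop_correct mem : prefix_inv 0 mem ->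
  terminates prog_prefix_loop mem
    (fun mem' t => prefix_inv n mem' /\ t <= n * (m * 3 + 6).+1 + 1).
Proof.
apply: terminates_while_count.
  by move=> i mem1 [[hN _] _ _ [hI _ _]]; rewrite /= hN hI Z_ltb_of_nat.
move=> i mem1 _ [[hN hM] hinp hP [hI hW hX]].
apply: terminates_store_seq; apply: terminates_store_seq; cbn [aeval]; rewrite hW.
apply: (terminates_seq (P := fun mem' t => prefix_row_inv i m mem' /\ t <= m * 3 + 1)).
  apply: prefix_row_correct; split; split.
  - by split; mem_cases.
  - by mem_frame hinp.
  - by mem_frame hP.
  - by split; mem_cases.
  - by mem_cases.
  - done.
  - by move=> b'; rewrite leqn0 => /eqP ->; mem_cases; rewrite ?prefix_value0 //; lia.
move=> mem2 t2 [[[[hN2 hM2] hinp2 hP2 [hI2 hW2 hX2]] [_ _ hrow2]] le_t2].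
do 2 apply: terminates_store_seq; apply: terminates_store; cbn [aeval].
split; last lia; split.
- by split; mem_cases.
- by mem_frame hinp2.
- move=> i' b lt_i'i le_bm; mem_cases.
  by case: (ltngtP i' i) => [lt_i'i'|gt_i'i|->]; [apply: hP2 | lia | apply: hrow2].
- by split; mem_cases; rewrite_cells mem2; rewrite ?mulSn; lia.
Qed.

Lemma prefix_correct mem : sizes_loaded mem -> input_loaded mem ->
  terminates prog_prefix mem (fun mem' t => (sizes_loaded mem' /\ prefix_table n mem') /\
    t <= n * (m * 3 + 6).+1 + 4).
Proof.
move=> [hN hM] hinp.
do 3 apply: terminates_store_seq; cbn [aeval].
apply: (terminates_weaken (prefix_loop_correct _)); last first.
  by move=> mem' t [[hsz _ hP _] le_t]; split=> //; lia.
split; [by split; mem_cases | by mem_frame hinp | by move=> ? ? /[!ltn0] | by split; mem_cases].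
Qed.
End PrefixTable.

(** * The reachability table *)

Section ReachabilityTable.
Variables (n m : nat) (v : 'I_n -> 'I_m -> nat).

Definition is_pred T i b a :=
  reachable v T i a && (prefix_value v i b == prefix_value v i a + T).

(* [q] is the outcome of scanning the candidates [a < lim] for a predecessor
   of [b]: 0 if there is none, and [a + 1] for one of them otherwise. *)
Definition pred_search T i b lim (q : Z) :=
  (q = 0%Z <-> forall a, a < lim -> ~~ is_pred T i b a) /\
  (q <> 0%Z -> exists a, [/\ a < lim, q = Z.of_nat a.+1 & is_pred T i b a]).

Definition Q_entry T i b (q : Z) :=
  if i is i'.+1 then pred_search T i' b b.+1 q else q = Z.b2z (b == 0).

Lemma pred_search0 T i b : pred_search T i b 0 0.
Proof. by split=> //; split. Qed.

Lemma pred_searchS T i b a q : pred_search T i b a q ->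
  pred_search T i b a.+1 (if is_pred T i b a then Z.of_nat a.+1 else q).
Proof.
move=> [q0 q_pred]; case E: (is_pred T i b a).
  split=> [|_]; last by exists a; split.
  split=> [|/(_ a (ltnSn a))]; [lia | by rewrite E].
split.
  split=> [/q0 none a' | none]; last by apply/q0 => a' /ltnW; apply: none.
  by rewrite ltnS leq_eqVlt => /orP [/eqP -> | /none]; rewrite ?E.
by move=> /q_pred [a' [lt_a'a ? ?]]; exists a'; split=> //; apply: ltnW.
Qed.

Lemma Q_entry_reachable T i b q : Q_entry T i b q -> (q <> 0%Z <-> reachable v T i b).
Proof.
case: i => [|i] /= => [-> | [q0 q_pred]]; first by case: (b == 0); split.
split=> [/q_pred [a [lt_ab _ pred_a]] | /existsP [a pred_a] /q0 /(_ a (ltn_ord a))].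
  by apply/existsP; exists (Ordinal lt_ab).
by rewrite /is_pred pred_a.
Qed.

Lemma Q_entry_pred T i b q : Q_entry T i.+1 b q -> q <> 0%Z ->
  exists a, [/\ a <= b, q = Z.of_nat a.+1, reachable v T i a &
                prefix_value v i b = prefix_value v i a + T].
Proof. by move=> [_ q_pred] /q_pred [a [lt_ab -> /andP [? /eqP ?]]]; exists a. Qed.

End ReachabilityTable.

Definition pred_test : bexp :=
  BAnd (BNot (BEq (Deref (Q_at (Reg rRow +' Reg rPred))) (Const 0)))
       (BEq (Defs.Sub (Deref (P_at (Reg rRow +' Reg rEnd))) (Deref (P_at (Reg rRow +' Reg rPred))))
            (Reg rTarget)).

Definition prog_pred_scan : stmt :=
  While (BNot (BLt (Reg rEnd) (Reg rPred)))
    (Seq (If pred_test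
             (Store (Q_at (Reg rRow +' Reg rM +' Const 1 +' Reg rEnd)) (Reg rPred +' Const 1))
             Skip)
         (Store (Const rPred) (Reg rPred +' Const 1))).

Definition prog_dp_row : stmt :=
  While (BNot (BLt (Reg rM) (Reg rEnd)))
    (Seq (Store (Q_at (Reg rRow +' Reg rM +' Const 1 +' Reg rEnd)) (Const 0))
    (Seq (Store (Const rPred) (Const 0))
    (Seq prog_pred_scan (Store (Const rEnd) (Reg rEnd +' Const 1))))).

Definition prog_dp_rows : stmt :=
  While (BLt (Reg rAgent) (Reg rN))
    (Seq (Store (Const rEnd) (Const 0))
    (Seq prog_dp_row
    (Seq (Store (Const rRow) (Reg rRow +' Reg rM +' Const 1))
         (Store (Const rAgent) (Reg rAgent +' Const 1))))).

Ltac search_ctx_frame H := let hP := fresh "hP" in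
  move: (H) => [[? ?] hP ? ? ?]; split; [by split; mem_cases | by mem_frame hP | by mem_cases ..].

Ltac dp_rows_frame H := let hctx := fresh "hctx" in let hQ := fresh "hQ" in
  move: (H) => [hctx hQ ? ?]; split; [search_ctx_frame hctx | by mem_frame hQ | by mem_cases ..].

Section DynamicProgram.
Variables (n m : nat) (v : 'I_n -> 'I_m -> nat) (k1 : nat).
Let T := prefix_value v 0 k1.

Definition search_ctx mem := [/\ sizes_loaded n m mem, prefix_table v n mem,
  mem rTarget = Z.of_nat T, mem rCand = Z.of_nat k1 & mem rFound = 0%Z].

Definition Q_table r mem := forall i b, i <= r -> b <= m ->
  Q_entry v T i b (mem (Q_cell (Z.of_nat (i * m.+1 + b)))).

Definition dp_rows_inv i mem := [/\ search_ctx mem, Q_table i mem,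
  mem rAgent = Z.of_nat i & mem rRow = Z.of_nat (i * m.+1)].

Definition next_row_done i b mem := forall b', b' < b ->
  Q_entry v T i.+1 b' (mem (Q_cell (Z.of_nat (i.+1 * m.+1 + b')))).

Definition dp_row_inv i b mem :=
  [/\ dp_rows_inv i mem, mem rEnd = Z.of_nat b & next_row_done i b mem].

Definition pred_scan_inv i b a mem :=
  [/\ dp_row_inv i b mem, mem rPred = Z.of_nat a, b <= m &
      pred_search v T i b a (mem (Q_cell (Z.of_nat (i.+1 * m.+1 + b))))].

Lemma Z_of_nat_next_row i b :
  (Z.of_nat (i * m.+1) + Z.of_nat m + 1 + Z.of_nat b)%Z = Z.of_nat (i.+1 * m.+1 + b).
Proof. by rewrite mulSnr; lia. Qed.

Lemma pred_test_correct i b a mem : i < n -> pred_scan_inv i b a mem -> a <= b ->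
  beval mem pred_test = is_pred v T i b a.
Proof.
move=> lt_in [[[[_ hP hT _ _] hQ _ hW] hB _] hA le_bm _] le_ab.
rewrite /pred_test; cbn [beval aeval]; rewrite hW hA hB hT -!(Nat2Z.inj_add (i * m.+1)).
rewrite !hP ?(leq_trans le_ab) // Z_eqb_sub_of_nat /is_pred; congr andb.
have /Q_entry_reachable reach_a := hQ i a (leqnn i) (leq_trans le_ab le_bm).
case: Z.eqb_spec => q_a /=; last exact/esym/reach_a.
by apply/esym/negbTE/negP => /reach_a; apply.
Qed.

Lemma pred_scan_correct i b mem : i < n -> pred_scan_inv i b 0 mem ->
  terminates prog_pred_scan mem
    (fun mem' t => pred_scan_inv i b b.+1 mem' /\ t <= b.+1 * 4 + 1).
Proof.
move=> lt_in; apply: (terminates_while_count (Inv := fun a => pred_scan_inv i b a)).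
  by move=> a mem1 [[_ hB _] hA _ _]; rewrite /= hB hA Z_nltb_of_nat.
move=> a mem1 lt_ab inv1; rewrite ltnS in lt_ab.
have test := pred_test_correct lt_in inv1 lt_ab.
case: inv1 => [[hrows hB hnext] hA le_bm /pred_searchS found].
have [[[_ hM] _ _ _ _] _ _ hW] := hrows.
pose Q_next := Q_cell (Z.of_nat (i.+1 * m.+1 + b)).
apply: (terminates_seq (P := fun mem2 t => t <= 2 /\ mem2 =
  if is_pred v T i b a then update mem1 Q_next (Z.of_nat a.+1) else mem1)).
  apply: terminates_if; rewrite test; case: ifP => _.
    by apply: terminates_store; cbn [aeval]; rewrite hW hM hB hA Z_of_nat_next_row Z_of_nat_add1.
  exact: (terminates_exec (ExSkip _)).
move=> mem2 t2 [le_t2 ->]; apply: terminates_store; cbn [aeval].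
split; last by lia.
move: found; rewrite /Q_next; case: (is_pred v T i b a) => found.
all: split; [split; [dp_rows_frame hrows | by mem_cases | by mem_frame hnext] | | done | ].
all: by mem_cases; rewrite_cells mem1; try lia.
Qed.

Lemma dp_row_correct i mem : i < n -> dp_row_inv i 0 mem ->
  terminates prog_dp_row mem
    (fun mem' t => dp_row_inv i m.+1 mem' /\ t <= m.+1 * (m.+1 * 4 + 4).+1 + 1).
Proof.
move=> lt_in; apply: terminates_while_count.
  by move=> b mem1 [[[[_ hM] _ _ _ _] _ _ _] hB _]; rewrite /= hB hM Z_nltb_of_nat.
move=> b mem1 lt_bm [hrows hB hnext].
have [[[_ hM] _ _ _ _] _ _ hW] := hrows.
do 2 apply: terminates_store_seq; cbn [aeval]; rewrite hW hM hB Z_of_nat_next_row.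
apply: (terminates_seq (@pred_scan_correct i b _ lt_in _)).
  split; last by mem_cases; apply: pred_search0.
  - by split; [dp_rows_frame hrows | mem_cases | mem_frame hnext].
  - by mem_cases.
  - done.
move=> mem2 t2 [[[hrows2 hB2 hnext2] _ _ hcur2] le_t2].
apply: terminates_store; cbn [aeval]; rewrite hB2 Z_of_nat_add1.
have le_b4 : b.+1 * 4 <= m.+1 * 4 by rewrite leq_mul2r.
split; last by lia.
split; [dp_rows_frame hrows2 | by mem_cases |].
move=> b' lt_b'b; mem_cases.
by case: (ltngtP b' b) => [/hnext2 // | lt_bb' | ->]; [lia | exact: hcur2].
Qed.

Lemma dp_rows_correct mem : dp_rows_inv 0 mem ->
  terminates prog_dp_rows mem (fun mem' t => dp_rows_inv n mem' /\
    t <= n * (m.+1 * (m.+1 * 4 + 4).+1 + 4).+1 + 1).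
Proof.
apply: terminates_while_count.
  by move=> i mem1 [[[hN _] _ _ _ _] _ hI _]; rewrite /= hN hI Z_ltb_of_nat.
move=> i mem1 lt_in hrows.
apply: terminates_store_seq; cbn [aeval].
apply: (terminates_seq (dp_row_correct lt_in _)).
  by split; [dp_rows_frame hrows | by mem_cases | move=> ? /[!ltn0]].
move=> mem2 t2 [[[hctx2 hQ2 hI2 hW2] _ hnext2] le_t2].
have [[_ hM2] _ _ _ _] := hctx2.
apply: terminates_store_seq; apply: terminates_store; cbn [aeval].
split; last by lia.
split; [search_ctx_frame hctx2 | | by mem_cases; rewrite_cells mem2; lia |].
  move=> i' b le_i'i le_bm; mem_cases.
  case: (ltngtP i' i.+1) => [lt_i'i | lt_ii' | ->]; [exact: hQ2 | lia | exact: hnext2].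
by mem_cases; rewrite_cells mem2; rewrite mulSnr; lia.
Qed.

End DynamicProgram.

(** * Searching for the equitable value *)

Definition prog_dp_init : stmt :=
  Seq (Store (Q_at (Const 0)) (Const 1)) (Seq (Store (Const rEnd) (Const 1))
  (While (BNot (BLt (Reg rM) (Reg rEnd)))
     (Seq (Store (Q_at (Reg rEnd)) (Const 0)) (Store (Const rEnd) (Reg rEnd +' Const 1))))).

Definition prog_try_target : stmt :=
  Seq (Store (Const rTarget) (Deref (P_at (Reg rCand))))
  (Seq prog_dp_init
  (Seq (Store (Const rAgent) (Const 0))
  (Seq (Store (Const rRow) (Const 0))
  (Seq prog_dp_rows
   (If (BEq (Deref (Q_at (Reg rRow +' Reg rM))) (Const 0))
       (Store (Const rCand) (Reg rCand +' Const 1))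
       (Store (Const rFound) (Const 1))))))).

Section TryTarget.
Variables (n m : nat) (v : 'I_n -> 'I_m -> nat) (k1 : nat).
Let T := prefix_value v 0 k1.

Definition dp_init_inv k mem := [/\ search_ctx v k1 mem, mem rEnd = Z.of_nat k.+1 &
  forall b, b <= k -> Q_entry v T 0 b (mem (Q_cell (Z.of_nat b)))].

Lemma dp_init_correct mem : search_ctx v k1 mem ->
  terminates prog_dp_init mem
    (fun mem' t => [/\ search_ctx v k1 mem', Q_table v k1 0 mem' & t <= m * 3 + 3]).
Proof.
move=> hctx; do 2 apply: terminates_store_seq; cbn [aeval].
apply: (terminates_weaken (P := fun mem' t => dp_init_inv m mem' /\ t <= m * 2.+1 + 1));
  last first.
  move=> mem' t [[hctx' _ hrow] le_t]; split=> //; last by lia.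
  by move=> i b /[!leqn0] /eqP -> le_bm; apply: hrow.
apply: terminates_while_count.
- by move=> k mem1 [[[_ hM] _ _ _ _] hB _]; rewrite /= hB hM Z_nltb_of_nat ltnS.
- move=> k mem1 _ [hctx1 hB hrow].
  apply: terminates_store_seq; apply: terminates_store; cbn [aeval]; rewrite hB.
  split=> //; split; [search_ctx_frame hctx1 | by mem_cases; lia |].
  move=> b le_bk; mem_cases; first by rewrite /Q_entry (_ : b == 0 = false) //; lia.
  by apply: hrow; lia.
- split; [search_ctx_frame hctx | by mem_cases |].
  by move=> b /[!leqn0] /eqP ->; mem_cases.
Qed.

Definition dp_found mem := [/\ Q_table v k1 n mem,
  mem rAgent = Z.of_nat n & mem rRow = Z.of_nat (n * m.+1)].

Definition try_target_post mem := [/\ sizes_loaded n m mem, prefix_table v n mem &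
  if reachable v T n m then [/\ mem rCand = Z.of_nat k1, mem rFound = 1%Z & dp_found mem]
  else mem rCand = Z.of_nat k1.+1 /\ mem rFound = 0%Z].

Lemma try_target_correct mem : 0 < n -> k1 <= m ->
  sizes_loaded n m mem -> prefix_table v n mem ->
  mem rCand = Z.of_nat k1 -> mem rFound = 0%Z ->
  terminates prog_try_target mem (fun mem' t => try_target_post mem' /\
    t <= n * (m.+1 * (m.+1 * 4 + 4).+1 + 4).+1 + m * 3 + 9).
Proof.
move=> n_gt0 le_tm [hN hM] hP hC hF.
apply: terminates_store_seq; cbn [aeval]; rewrite hC.
apply: (terminates_seq (dp_init_correct _)).
  have := hP 0 k1 n_gt0 le_tm; rewrite mul0n add0n => hP0.
  by split; [split; mem_cases | mem_frame hP | mem_cases ..].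
move=> mem2 t2 [hctx2 hQ2 le_t2].
do 2 apply: terminates_store_seq; cbn [aeval].
apply: (terminates_seq (dp_rows_correct (v := v) (k1 := k1) _)).
  by split; [search_ctx_frame hctx2 | mem_frame hQ2 | mem_cases ..].
move=> mem3 t3 [[hctx3 hQ3 hI3 hW3] le_t3].
have [[hN3 hM3] hP3 _ hC3 hF3] := hctx3.
have /Q_entry_reachable reach_q := hQ3 n m (leqnn n) (leqnn m).
apply: terminates_if; cbn [beval aeval]; rewrite hW3 hM3 -Nat2Z.inj_add.
case E: (reachable v T n m); move: reach_q; rewrite E.
- move=> [_ /(_ isT) /Z.eqb_neq ->]; apply: terminates_store; cbn [aeval].
  split; last by lia.
  rewrite /try_target_post E; split; [by split; mem_cases | by mem_frame hP3 |].
  by split; [mem_cases | mem_cases | split; [mem_frame hQ3 | mem_cases ..]].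
- move=> [q_ne0 _]; set q := mem3 _.
  have -> : q = 0%Z by case: (Z.eq_dec q 0) => // /q_ne0.
  apply: terminates_store; cbn [aeval].
  split; last by lia.
  rewrite /try_target_post E; split; [by split; mem_cases | by mem_frame hP3 |].
  by split; mem_cases; rewrite_cells mem3; lia.
Qed.

End TryTarget.

Definition search_test : bexp :=
  BAnd (BNot (BLt (Reg rM) (Reg rCand))) (BEq (Reg rFound) (Const 0)).

Definition prog_search : stmt := While search_test prog_try_target.

Section Search.
Variables (n m : nat) (v : 'I_n -> 'I_m -> nat).

Definition search_pending k1 mem := [/\ mem rFound = 0%Z, k1 <= m.+1 &
  forall t, t < k1 -> ~~ reachable v (prefix_value v 0 t) n m].

Definition search_found k1 mem := [/\ mem rFound = 1%Z, k1 <= m,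
  reachable v (prefix_value v 0 k1) n m & dp_found v k1 mem].

Definition search_inv k mem := exists k1,
  [/\ sizes_loaded n m mem, prefix_table v n mem, mem rCand = Z.of_nat k1 &
      search_pending k1 mem /\ k = m.+1 - k1 \/ search_found k1 mem /\ k = 0].

Definition search_outcome mem := sizes_loaded n m mem /\
  ((exists k1, search_found k1 mem) \/
   (mem rFound = 0%Z /\ forall t, t <= m -> ~~ reachable v (prefix_value v 0 t) n m)).

Lemma search_step : 0 < n -> forall k mem, search_inv k mem -> beval mem search_test ->
  terminates prog_try_target mem (fun mem' t => exists2 k', k' < k & search_inv k' mem' /\
    t <= n * (m.+1 * (m.+1 * 4 + 4).+1 + 4).+1 + m * 3 + 9).
Proof.
move=> n_gt0 k mem [k1 [hsz hP hC [[[hF _ none] ->] | [[hF _ _ _] _]]]]; last first.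
  by rewrite /search_test /= hF andbF.
have [_ hM] := hsz.
rewrite /search_test /= hM hC hF Z_nltb_of_nat andbT ltnS => le_tm.
apply: (terminates_weaken (try_target_correct n_gt0 le_tm hsz hP hC hF)).
move=> mem' t [[hsz' hP']]; case E: (reachable _ _ n m) => post le_t.
  case: post => hC' hF' hdp.
  by exists 0; [lia | split=> //; exists k1; split=> //; right; split].
case: post => hC' hF'; exists (m.+1 - k1.+1); first lia.
split=> //; exists k1.+1; split=> //; left; split=> //; split=> // t' /[!ltnS].
by rewrite leq_eqVlt => /orP [/eqP -> | /none]; rewrite ?E.
Qed.

Lemma search_correct mem : 0 < n -> sizes_loaded n m mem -> prefix_table v n mem ->
  mem rCand = 0%Z -> mem rFound = 0%Z ->
  terminates prog_search mem (fun mem' t => search_outcome mem' /\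
    t <= m.+1 * (n * (m.+1 * (m.+1 * 4 + 4).+1 + 4).+1 + m * 3 + 9).+1 + 1).
Proof.
move=> n_gt0 hsz hP hC hF.
have inv0 : search_inv m.+1 mem by exists 0; split=> //; left; split.
apply: (terminates_weaken (terminates_while_measure (search_step n_gt0) inv0)).
move=> mem' t [[k [k1 [hsz' _ hC' inv']]] [Etest le_t]]; split=> //; split=> //.
case: inv' => [[[hF' _ none] _] | [found _]]; last by left; exists k1.
right; split=> // t' le_t'm; apply: none.
have [_ hM] := hsz'.
by move: Etest; rewrite /search_test /= hM hC' hF' Z_nltb_of_nat andbT ltnS => /negbT; lia.
Qed.

End Search.

(** * Reading back the cuts *)

Definition prog_backtrack_step : stmt :=
  Seq (Store (Const rCut) (Defs.Sub (Deref (Q_at (Reg rRow +' Reg rCut))) (Const 1)))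
  (Seq (Store (Const rRow) (Defs.Sub (Reg rRow) (Reg rM +' Const 1)))
  (Seq (Store (Const rAgent) (Defs.Sub (Reg rAgent) (Const 1)))
       (Store (Reg rAgent +' Const 1) (Reg rCut)))).

Definition prog_backtrack_loop : stmt := While (BLt (Const 0) (Reg rAgent)) prog_backtrack_step.

Definition prog_backtrack : stmt :=
  Seq (Store (Const rCut) (Reg rM)) (Seq (Store (Reg rN +' Const 1) (Reg rM))
  (Seq prog_backtrack_loop (Store (Const 0) (Const 1)))).

Definition prog_answer : stmt :=
  If (BEq (Reg rFound) (Const 1)) prog_backtrack (Store (Const 0) (Const 0)).

Section Backtrack.
Variables (n m : nat) (v : 'I_n -> 'I_m -> nat) (k1 : nat).
Let T := prefix_value v 0 k1.

Definition cut_chain lo k := forall j, lo <= j -> j < n ->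
  k j <= k j.+1 /\ prefix_value v j (k j.+1) = prefix_value v j (k j) + T.

Definition cuts_written lo k mem := forall j, lo <= j -> j <= n ->
  [/\ mem (Z.of_nat j.+1) = Z.of_nat (k j), reachable v T j (k j) & k j <= m].

Definition backtrack_inv d mem := [/\ sizes_loaded n m mem, Q_table v k1 n mem,
  mem rAgent = Z.of_nat (n - d), mem rRow = Z.of_nat ((n - d) * m.+1) &
  exists k, [/\ mem rCut = Z.of_nat (k (n - d)), k n = m,
                cuts_written (n - d) k mem & cut_chain (n - d) k]].

Lemma backtrack_step d mem : d < n -> backtrack_inv d mem ->
  terminates prog_backtrack_step mem (fun mem' t => backtrack_inv d.+1 mem' /\ t <= 4).
Proof.
move=> lt_dn [[hN hM] hQ hI hW [k [hC kn written chain]]].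
have [i ei] : exists i, n - d = i.+1 by exists (n - d).-1; lia.
rewrite ei in hI hW hC written chain.
have ed : n - d.+1 = i by lia.
have le_in : i.+1 <= n by lia.
have [_ reach_k le_km] := written i.+1 (leqnn _) le_in.
have [a [le_ak qa reach_a pa]] : exists a, [/\ a <= k i.+1,
    mem (Q_cell (Z.of_nat (i.+1 * m.+1 + k i.+1))) = Z.of_nat a.+1,
    reachable v T i a & prefix_value v i (k i.+1) = prefix_value v i a + T].
  have q := hQ i.+1 (k i.+1) le_in le_km; apply: (Q_entry_pred q).
  by apply/(Q_entry_reachable q).
do 3 apply: terminates_store_seq; apply: terminates_store; cbn [aeval].
rewrite hW hC -Nat2Z.inj_add qa; split; last by [].
rewrite /backtrack_inv ed; split; [| by mem_frame hQ | | |].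
- by split; mem_cases; rewrite_cells mem; lia.
- by mem_cases; rewrite_cells mem; lia.
- by mem_cases; rewrite_cells mem; rewrite mulSnr in hW *; lia.
exists (fun j => if j == i then a else k j); rewrite eqxx.
split; [by mem_cases; rewrite_cells mem; lia | by rewrite ifN //; lia | |].
- move=> j le_ij le_jn; case: (eqVneq j i) => [->|ne_ji].
    by split=> //; [mem_cases; rewrite_cells mem; lia | lia].
  have lt_ij : i < j by rewrite ltn_neqAle eq_sym ne_ji.
  have [hkj ? ?] := written j lt_ij le_jn.
  by split=> //; mem_cases; rewrite_cells mem; rewrite ?hkj; lia.
- move=> j le_ij lt_jn; case: (eqVneq j i) => [->|ne_ji].
    by rewrite ifN //; lia.
  by rewrite ifN; [apply: chain | ]; lia.
Qed.

Lemma backtrack_loop_correct mem : backtrack_inv 0 mem ->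
  terminates prog_backtrack_loop mem (fun mem' t => backtrack_inv n mem' /\ t <= n * 5 + 1).
Proof.
move=> inv0.
apply: (terminates_weaken (P := fun mem' t => (n <= n /\ backtrack_inv n mem') /\ t <= n * 5 + 1)).
  apply: (terminates_while_count (Inv := fun d mem => d <= n /\ backtrack_inv d mem)) => //.
  - move=> d mem1 [_ [_ _ hI _ _]].
    by rewrite /= hI (_ : 0%Z = Z.of_nat 0) // Z_ltb_of_nat; lia.
  - move=> d mem1 lt_dn [_ /(backtrack_step lt_dn) step].
    by apply: (terminates_weaken step) => mem' t [inv' le_t].
by move=> mem' t [[_ inv'] le_t].
Qed.

End Backtrack.

Section Answer.
Variables (n m : nat) (v : 'I_n -> 'I_m -> nat).

Definition equitable_cuts_written mem := exists k : nat -> nat,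
  (forall i, i <= n -> mem (Z.of_nat i.+1) = Z.of_nat (k i)) /\
  cut_indices n m k /\ equitable v (@alloc_of_cuts n m k).

Lemma backtrack_correct k1 mem : sizes_loaded n m mem -> search_found v k1 mem ->
  terminates prog_backtrack mem (fun mem' t =>
    [/\ mem' 0%Z = 1%Z, equitable_cuts_written mem' & t <= n * 5 + 4]).
Proof.
move=> [hN hM] [_ _ reach [hQ hI hW]].
do 2 apply: terminates_store_seq; cbn [aeval].
apply: (terminates_seq (backtrack_loop_correct (v := v) (k1 := k1) _)).
  rewrite /backtrack_inv subn0.
  split; [by split; mem_cases; lia | by mem_frame hQ | by mem_cases.. |].
  exists (fun _ => m); split=> //; [by mem_cases | | by move=> j ? ?; lia].
  move=> j le_nj le_jn; have -> : j = n by lia.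
  by split=> //; mem_cases; rewrite_cells mem; lia.
move=> mem1 t1 [[_ _ _ _ [k [_ kn written chain]]] le_t1].
apply: terminates_store; cbn [aeval]; split; [by mem_cases | | lia].
rewrite subnn in written chain.
have [? reach0 _] := written 0 (leqnn 0) (leq0n n).
have [cuts equit] := equitable_of_chain (eqP reach0) kn (fun j => chain j (leq0n j)).
exists k; split=> // i le_in; have [hk _ _] := written i (leq0n i) le_in.
by mem_cases; rewrite hk.
Qed.

Lemma prog_answer_correct mem : search_outcome v mem ->
  terminates prog_answer mem (fun mem' t => t <= n * 5 + 6 /\
    (mem' 0%Z = 1%Z /\ equitable_cuts_written mem' \/
     mem' 0%Z = 0%Z /\ forall t, t <= m -> ~~ reachable v (prefix_value v 0 t) n m)).
Proof.
move=> [hsz [[k1 found] | [hF none]]]; apply: terminates_if; cbn [beval aeval].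
  have [hF _ _ _] := found; rewrite hF /=.
  apply: (terminates_weaken (backtrack_correct hsz found)).
  by move=> mem' t [? ? ?]; split; [lia | left].
rewrite hF /=; apply: terminates_store; cbn [aeval]; split; first lia.
by right; split=> //; mem_cases.
Qed.

End Answer.

Definition prog_main : stmt :=
  Seq (Store (Const rN) (Reg 0)) (Seq (Store (Const rM) (Reg 1))
  (Seq prog_prefix (Seq (Store (Const rFound) (Const 0)) (Seq (Store (Const rCand) (Const 0))
  (Seq prog_search prog_answer))))).

(* Without items the all-empty allocation is equitable; the answer cells
   [1, n + 1] already hold its cuts, all 0. *)
Definition equitable_prog : stmt :=
  If (BEq (Reg 1) (Const 0)) (Store (Const 0) (Const 1)) prog_main.

Section Correctness.
Variables (n m : nat) (v : 'I_n -> 'I_m -> nat).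

Definition equitable_allocation_exists :=
  exists A : 'I_n -> {set 'I_m},
    is_allocation A /\ order_consistent_contiguous A /\ equitable v A.

Lemma equitable_allocation_of_cuts mem :
  equitable_cuts_written v mem -> equitable_allocation_exists.
Proof.
move=> [k [_ [cuts equit]]]; exists (@alloc_of_cuts n m k).
by split; [apply: alloc_of_cuts_is_allocation | split=> //; exists k].
Qed.

Definition correct_answer mem :=
  mem 0%Z = 1%Z /\ equitable_cuts_written v mem \/
  mem 0%Z = 0%Z /\ ~ equitable_allocation_exists.

Lemma correct_answer_spec mem : correct_answer mem ->
  (mem 0%Z = 1%Z <-> equitable_allocation_exists) /\
  (mem 0%Z = 1%Z -> equitable_cuts_written v mem).
Proof.
case=> [[-> written] | [-> none]].
  by split=> //; split=> // _; apply: equitable_allocation_of_cuts written.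
by split=> //; split=> // /none.
Qed.

Lemma main_correct : 0 < n -> 0 < m ->
  terminates prog_main (input_memory v) (fun mem' t =>
    t < 1000 * (n * m ^ 3 + 1) /\ correct_answer mem').
Proof.
move=> n_gt0 m_gt0.
do 2 apply: terminates_store_seq; cbn [aeval].
apply: (terminates_seq (prefix_correct (v := v) _ _)).
- by split; mem_cases.
- by move=> i j lt_jm; mem_cases; apply: input_memory_cell.
move=> mem1 t1 [[hsz hP] le_t1]; have [hN hM] := hsz.
do 2 apply: terminates_store_seq; cbn [aeval].
apply: (terminates_seq (search_correct (v := v) n_gt0 _ _ _ _)).
- by split; mem_cases.
- by mem_frame hP.
- by mem_cases.
- by mem_cases.
move=> mem2 t2 [outcome le_t2].
apply: (terminates_weaken (prog_answer_correct outcome)) => mem' t3 [le_t3 answer].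
split; first by rewrite !expnS expn0 muln1; nia.
case: answer => [found | [out0 none]]; first by left.
right; split=> // -[A [_ [contig equit]]].
by have [t le_tm] := reachable_of_equitable n_gt0 contig equit; apply/negP/none.
Qed.

End Correctness.

Lemma input_memory_no_items n (v : 'I_n -> 'I_0 -> nat) x :
  x <> 0%Z -> input_memory v x = 0%Z.
Proof.
rewrite /input_memory; case: Z.eqb_spec => // _ _; case: Z.eqb_spec => // _.
by case: (2 <=? x)%Z => //; case: insub => // i; case: insub => // -[].
Qed.

Lemma equitable_prog_no_items n (v : 'I_n -> 'I_0 -> nat) :
  terminates equitable_prog (input_memory v) (fun mem' t =>
    t <= 2 /\ correct_answer v mem').
Proof.
apply: terminates_if; cbn [beval aeval] => /=; apply: terminates_store; cbn [aeval].
split=> //.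
left; split; first by mem_cases.
have [cuts equit] :=
  @equitable_of_chain n 0 v 0 (fun _ => 0) erefl erefl (fun _ _ => conj isT (esym (addn0 _))).
exists (fun _ => 0); split=> // i _; mem_cases; apply: input_memory_no_items; lia.
Qed.

Lemma equitable_prog_correct n m (v : 'I_n -> 'I_m -> nat) : items_positively_valued v ->
  terminates equitable_prog (input_memory v) (fun mem' t =>
    t <= 1000 * (n * m ^ 3 + 1) /\ correct_answer v mem').
Proof.
move=> positive; case: (posnP m) => [m0 | m_gt0].
  subst m; apply: (terminates_weaken (equitable_prog_no_items v)) => mem' t [le_t2 answer].
  by split=> //; lia.
have [i _] := positive (Ordinal m_gt0); have n_gt0 : 0 < n by apply: leq_ltn_trans (ltn_ord i).
apply: terminates_if; cbn [beval aeval].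
have -> : input_memory v 1%Z = Z.of_nat m by [].
rewrite (_ : (Z.of_nat m =? 0)%Z = false); last by apply/Z.eqb_neq; lia.
apply: (terminates_weaken (main_correct v n_gt0 m_gt0)) => mem' t [le_t answer].
by split=> //; lia.
Qed.

Theorem mainTheorem3 :
  exists (P : stmt) (c : nat),
  forall (n m : nat) (v : 'I_n -> 'I_m -> nat),
    items_positively_valued v ->
    exists (mem' : memory) (t : nat),
      exec P (input_memory v) t mem' /\
      t <= c * (n * m ^ 3 + 1) /\
      (mem' 0%Z = 1%Z <->
         exists A : 'I_n -> {set 'I_m},
           is_allocation A /\ order_consistent_contiguous A /\ equitable v A) /\
      (mem' 0%Z = 1%Z ->
         exists k : nat -> nat,
           (forall i, i <= n -> mem' (Z.of_nat i.+1) = Z.of_nat (k i)) /\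
           cut_indices n m k /\
           equitable v (@alloc_of_cuts n m k)).
Proof.
exists equitable_prog, 1000 => n m v positive.
have [mem' [t [ex [le_t /correct_answer_spec answer]]]] := equitable_prog_correct positive.
by exists mem', t.
Qed.
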